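(* Let $K$ be a field containing $\mathbb{Q}$ and $n\in\mathbb{N}^+$. Then $\Gamma_n\cong A_n$ as $K$-algebras.
   Context: $\Gamma$ denotes the set of all functions $\mathbb{N}^+\to K$ with pointwise addition and the convolution product $(fg)(m)=\sum_{ab=m}f(a)g(b)$; $\Gamma_n=\{f\in\Gamma: f(m)=0\ \forall m>n\}$ with the truncated product $(fg)(m)=\sum_{ab=m}f(a)g(b)$ for $m\le n$ and $0$ for $m>n$. $X=\{x_1,x_2,\dots\}$, $\mathcal{M}$ is the free commutative monoid on $X$, and $K[[X]]$ is the ring of all functions $\mathcal{M}\to K$. The weight of $x_1^{a_1}\cdots x_k^{a_k}$ is $p_1^{a_1}\cdots p_k^{a_k}$, $p_i$ the $i$-th prime. $I_n\subseteq K[[X]]$ is the set of power series supported on monomials of weight $>n$ (the monomial ideal generated by monomials of weight $>n$), and $A_n=K[[X]]/I_n$. *)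

From HB Require Import structures.
From mathcomp Require Import all_boot all_order all_algebra.
From Stdlib Require Import ClassicalEpsilon.
Set Implicit Arguments. Unset Strict Implicit. Unset Printing Implicit Defensive.
Import GRing.Theory.
Local Open Scope ring_scope.

(* ---------- primes p_1 = 2, p_2 = 3, ... (0-indexed: nthprime 0 = 2) ---------- *)
Lemma nextprime_ex (m : nat) : exists p : nat, (m < p)%N && prime p.
Proof. by case: (prime_above m) => p H1 H2; exists p; rewrite H1 H2. Qed.

Definition nextprime (m : nat) : nat := ex_minn (nextprime_ex m).

Fixpoint nthprime (k : nat) : nat :=
  match k with 0 => 2%N | k'.+1 => nextprime (nthprime k') end.

(* A monomial x_1^{a_1} ... x_k^{a_k} is its exponent sequence [:: a_1; ...; a_k]
   without trailing zeros. *)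
Definition monom := {s : seq nat | last 1%N s != 0%N}.

Fixpoint strip (s : seq nat) : seq nat :=
  match s with
  | [::] => [::]
  | x :: t => let t' := strip t in
              if (t' == [::]) && (x == 0%N) then [::] else x :: t'
  end.

Lemma strip_ok (s : seq nat) : last 1%N (strip s) != 0%N.
Proof.
elim: s => [|x t IH] //=.
case E: (strip t) IH => [|y u] /= IH.
  by case: x.
by [].
Qed.

Definition nrm (s : seq nat) : monom := exist _ (strip s) (strip_ok s).

(* all exponent sequences d of the same length as s with d_i <= s_i
   (these represent exactly the divisors of the monomial s) *)
Fixpoint divs (s : seq nat) : seq (seq nat) :=
  match s with
  | [::] => [:: [::]]
  | x :: t => [seq i :: u | i <- iota 0 x.+1, u <- divs t]
  end.

(* the cofactor s / d *)
Definition cosub (s d : seq nat) : seq nat := [seq (p.1 - p.2)%N | p <- zip s d].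

Definition weight (m : monom) : nat :=
  (\prod_(i < size (val m)) (nthprime i) ^ (nth 0%N (val m) i))%N.

Section PowerSeries.
Variable K : fieldType.

Definition pser := monom -> K.

Definition ps_add (f g : pser) : pser := fun m => f m + g m.
Definition ps_scale (c : K) (f : pser) : pser := fun m => c * f m.
Definition ps_mul (f g : pser) : pser :=
  fun m => \sum_(d <- divs (val m)) f (nrm d) * g (nrm (cosub (val m) d)).
Definition ps_one : pser := fun m => if val m == [::] then 1 else 0.

Definition In_ideal (n : nat) (f : pser) : Prop :=
  forall m : monom, (weight m <= n)%N -> f m = 0.

(* A_n = K[[X]] / I_n : the type of cosets f + I_n *)
Definition coset (n : nat) (f : pser) : pser -> Prop :=
  fun g => In_ideal n (fun m => g m - f m).

Definition An (n : nat) := {S : pser -> Prop | exists f : pser, S = coset n f}.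

Definition An_of (n : nat) (f : pser) : An n :=
  exist _ (coset n f) (ex_intro _ f erefl).

Definition An_rep (n : nat) (a : An n) : pser :=
  proj1_sig (constructive_indefinite_description _ (proj2_sig a)).

Definition An_add (n : nat) (a b : An n) : An n :=
  An_of n (ps_add (An_rep a) (An_rep b)).
Definition An_scale (n : nat) (c : K) (a : An n) : An n :=
  An_of n (ps_scale c (An_rep a)).
Definition An_mul (n : nat) (a b : An n) : An n :=
  An_of n (ps_mul (An_rep a) (An_rep b)).
Definition An_one (n : nat) : An n := An_of n ps_one.

(* Functions N^+ -> K are encoded as functions nat -> K whose (junk) value
   at 0 is 0; Gamma_n = those vanishing at every m > n. *)
Definition Gamma (n : nat) :=
  {f : nat -> K | forall m : nat, ~~ (0 < m <= n)%N -> f m = 0}.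

Definition trunc (n : nat) (f : nat -> K) : nat -> K :=
  fun m => if (0 < m <= n)%N then f m else 0.

Lemma trunc_ok (n : nat) (f : nat -> K) :
  forall m : nat, ~~ (0 < m <= n)%N -> trunc n f m = 0.
Proof. by move=> m /negbTE H; rewrite /trunc H. Qed.

Definition mkG (n : nat) (f : nat -> K) : Gamma n :=
  exist _ (trunc n f) (@trunc_ok n f).

Definition G_add (n : nat) (f g : Gamma n) : Gamma n :=
  mkG n (fun m => proj1_sig f m + proj1_sig g m).
Definition G_scale (n : nat) (c : K) (f : Gamma n) : Gamma n :=
  mkG n (fun m => c * proj1_sig f m).
Definition G_mul (n : nat) (f g : Gamma n) : Gamma n :=
  mkG n (fun m => \sum_(d <- divisors m) proj1_sig f d * proj1_sig g (m %/ d)%N).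
Definition G_one (n : nat) : Gamma n := mkG n (fun m => (m == 1%N)%:R).

End PowerSeries.

From HB Require Import structures.
From mathcomp Require Import all_boot all_order all_algebra.
From Stdlib Require Import ClassicalEpsilon ProofIrrelevance.
From Stdlib Require Import FunctionalExtensionality PropExtensionality.
Import GRing.Theory.

Set Implicit Arguments.
Unset Strict Implicit.
Unset Printing Implicit Defensive.

(** By unique factorisation the weight is a bijection from the monomials onto
   the positive integers which carries the divisors of a monomial onto the
   divisors of its weight.  Hence [f |-> f o weight] turns truncated Dirichlet
   convolution into the product of power series modulo the monomials of weight
   > n: [Gamma_n] is [A_n] re-indexed by the weight. *)

Lemma nthprime_prime k : prime (nthprime k).
Proof. by case: k => [|k] //=; rewrite /nextprime; case: ex_minnP => m /andP[]. Qed.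

Lemma nthprime_ltnS k : (nthprime k < nthprime k.+1).
Proof. by rewrite /= /nextprime; case: ex_minnP => m /andP[]. Qed.

Lemma nthprimeS_min k p :
  (nthprime k < p) -> prime p -> (nthprime k.+1 <= p).
Proof.
rewrite /= /nextprime; case: ex_minnP => q _ qmin ltkp pp.
by apply: qmin; rewrite ltkp.
Qed.

Lemma nthprime_lt : {homo nthprime : j k / (j < k)}.
Proof. exact: homo_ltn ltn_trans nthprime_ltnS. Qed.

Lemma nthprime_bracket m :
  (2 <= m) -> exists i, (nthprime i <= m < nthprime i.+1).
Proof.
elim: m => [|m IHm] //; rewrite leq_eqVlt => /orP[/eqP<-|].
  by exists 0; exact: (nthprime_ltnS 0).
rewrite ltnS => /IHm [i /andP[lei ltSi]].
have [ltmS|geSm] := ltnP m.+1 (nthprime i.+1).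
  by exists i; rewrite ltmS (leq_trans lei).
by exists i.+1; rewrite geSm (leq_ltn_trans ltSi) ?nthprime_ltnS.
Qed.

Lemma prime_nthprime p : prime p -> exists i, nthprime i = p.
Proof.
move=> pp; have [i /andP[leip ltpS]] := nthprime_bracket (prime_gt1 pp).
exists i; apply/eqP; rewrite eqn_leq leip leqNgt; apply/negP => ltip.
by have := nthprimeS_min ltip pp; rewrite leqNgt ltpS.
Qed.

Fixpoint wt (k : nat) (s : seq nat) : nat :=
  if s is x :: t then (nthprime k ^ x * wt k.+1 t) else 1.

Lemma wtE k s : wt k s = (\prod_(i < size s) nthprime (k + i) ^ nth 0 s i).
Proof.
elim: s k => [|x t IHt] k /=; first by rewrite big_ord0.
rewrite big_ord_recl addn0 IHt; congr (_ * _).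
by apply: eq_bigr => i _; rewrite /bump /= add0n addnS.
Qed.

Lemma weightE m : weight m = wt 0 (val m).
Proof. by rewrite wtE. Qed.

Lemma wt_gt0 k s : 0 < wt k s.
Proof.
elim: s k => [|x t IHt] k //=.
by rewrite muln_gt0 IHt andbT expn_gt0 prime_gt0 ?nthprime_prime.
Qed.

Lemma wt_strip k s : wt k (strip s) = wt k s.
Proof.
elim: s k => [|x t IHt] k //=.
case: ifP => [/andP[/eqP st0 /eqP ->]|_] /=; last by rewrite IHt.
by rewrite -IHt st0 mul1n.
Qed.

Lemma coprime_wt j k s : j < k -> coprime (nthprime j) (wt k s).
Proof.
elim: s k => [|x t IHt] k ltjk /=; first exact: coprimen1.
rewrite coprimeMr IHt ?(ltn_trans ltjk) // andbT coprimeXr //.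
rewrite prime_coprime ?nthprime_prime // dvdn_prime2 ?nthprime_prime //.
by rewrite neq_ltn nthprime_lt.
Qed.

Lemma logn_wt k s i : logn (nthprime (k + i)) (wt k s) = nth 0 s i.
Proof.
elim: s k i => [|x t IHt] k i /=; first by rewrite logn1 nth_nil.
rewrite lognM ?wt_gt0 ?expn_gt0 ?prime_gt0 ?nthprime_prime //.
rewrite lognX logn_prime ?nthprime_prime //.
case: i => [|i].
  by rewrite addn0 eqxx muln1 (logn_coprime (coprime_wt _ (ltnSn k))) addn0.
by rewrite gtn_eqF ?nthprime_lt ?addnS ?ltnS ?leq_addr // muln0 -addSn IHt.
Qed.

Lemma wt_inj_nth k s s' : wt k s = wt k s' -> nth 0 s =1 nth 0 s'.
Proof. by move=> eq_wt i; rewrite -!(logn_wt k) eq_wt. Qed.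

Lemma wt_incr_nth k s i : wt k (incr_nth s i) = nthprime (k + i) * wt k s.
Proof.
elim: i k s => [|i IHi] k [|x t] /=.
- by rewrite addn0 muln1.
- by rewrite addn0 expnS mulnA.
- rewrite (_ : ncons i 0 [:: 1] = incr_nth [::] i); last by case: i {IHi}.
  by rewrite IHi mul1n addSnnS.
- by rewrite IHi addSnnS mulnCA.
Qed.

Lemma wt_surj N : 0 < N -> exists s, wt 0 s = N.
Proof.
elim: N {-2}N (leqnn N) => [|N IHN] M leMN M_gt0; first by case: M leMN M_gt0.
have [M_gt1|M_le1] := ltnP 1 M; last first.
  by exists [::]; apply/eqP; rewrite eqn_leq M_gt0 M_le1.
have [p_pr p_dvd] := (pdiv_prime M_gt1, pdiv_dvd M).
have [i pE] := prime_nthprime p_pr.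
have leMp : M %/ pdiv M <= N.
  by rewrite -ltnS (leq_trans _ leMN) // ltn_Pdiv ?prime_gt1.
have [|s sE] := IHN _ leMp; first by rewrite divn_gt0 ?prime_gt0 // dvdn_leq.
by exists (incr_nth s i); rewrite wt_incr_nth sE pE mulnC divnK.
Qed.

Lemma divs_size s d : d \in divs s -> size d = size s.
Proof.
elim: s d => [|x t IHt] d; first by rewrite inE => /eqP->.
by case/allpairsPdep => [i [u [_ u_in ->]]] /=; rewrite IHt.
Qed.

Lemma divs_uniq s : uniq (divs s).
Proof.
elim: s => [|x t IHt] //; apply: allpairs_uniq_dep => //; first exact: iota_uniq.
by move=> [a b] [c d] _ _ /= [-> ->].
Qed.

Lemma wt_cosub k s d : d \in divs s -> wt k s = wt k d * wt k (cosub s d).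
Proof.
elim: s k d => [|x t IHt] k d; first by rewrite inE => /eqP->.
case/allpairsPdep => [i [u [i_in u_in ->]]] /=.
rewrite (IHt k.+1 u u_in) mulnACA -expnD subnKC //.
by move: i_in; rewrite mem_iota ltnS.
Qed.

Lemma dvdn_wt k s x : x %| wt k s -> exists2 d, d \in divs s & x = wt k d.
Proof.
elim: s k x => [|a t IHt] k x /=.
  by rewrite dvdn1 => /eqP->; exists [::]; rewrite ?inE.
set p := nthprime k => x_dvd; have p_pr : prime p := nthprime_prime k.
have x_gt0 : 0 < x.
  by apply: dvdn_gt0 x_dvd; rewrite muln_gt0 wt_gt0 expn_gt0 prime_gt0.
have le_log : logn p x <= a.
  rewrite -[leqRHS](logn_wt k (a :: t) 0) addn0.
  exact: dvdn_leq_log (wt_gt0 k (a :: t)) x_dvd.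
have x'_dvd : x`_p^' %| wt k.+1 t.
  have x'_coprime : coprime x`_p^' (p ^ a).
    by rewrite coprime_sym (pnat_coprime (pi := p)) ?pnatX ?pnat_id ?part_pnat.
  rewrite -(Gauss_dvdr _ x'_coprime); apply: dvdn_trans x_dvd.
  by rewrite -{2}(partnC p x_gt0) dvdn_mull.
have [d' d'_in x'E] := IHt _ _ x'_dvd.
exists (logn p x :: d').
  change (logn p x :: d' \in [seq i :: u | i <- iota 0 a.+1, u <- divs t]).
  by apply/allpairsPdep; exists (logn p x), d'; rewrite mem_iota ltnS.
by rewrite /= -x'E -p_part partnC.
Qed.

Lemma divisors_wt s : perm_eq (divisors (wt 0 s)) [seq wt 0 d | d <- divs s].
Proof.
apply: uniq_perm; rewrite ?divisors_uniq //.
  rewrite map_inj_in_uniq ?divs_uniq // => d1 d2 d1_in d2_in /wt_inj_nth eq_nth.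
  by apply: (eq_from_nth (x0 := 0)); rewrite ?(divs_size d1_in) ?(divs_size d2_in).
move=> x; rewrite -dvdn_divisors ?wt_gt0 //; apply/idP/mapP.
  by case/dvdn_wt=> d; exists d.
by case=> d d_in ->; rewrite (wt_cosub 0 d_in) dvdn_mulr.
Qed.

Lemma weight_gt0 m : 0 < weight m.
Proof. by rewrite weightE wt_gt0. Qed.

Lemma weight_nrm s : weight (nrm s) = wt 0 s.
Proof. by rewrite weightE wt_strip. Qed.

Lemma weight_divs m d : d \in divs (val m) ->
  weight m = weight (nrm d) * weight (nrm (cosub (val m) d)).
Proof. by move=> d_in; rewrite !weight_nrm weightE (wt_cosub 0 d_in). Qed.

Lemma weight_inj : injective weight.
Proof.
have size_le (u v : seq nat) : last 1 u != 0 -> nth 0 u =1 nth 0 v ->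
    size u <= size v.
  move=> u_last eq_uv; rewrite leqNgt; apply/negP => ltvu.
  case: u u_last eq_uv ltvu => // y u u_last eq_uv ltvu.
  move: u_last; rewrite (_ : last 1 _ = last 0 (y :: u)) //.
  by rewrite -nth_last eq_uv nth_default.
move=> [s s_last] [s' s'_last]; rewrite !weightE /= => /wt_inj_nth eq_ss'.
apply: val_inj; apply: (eq_from_nth (x0 := 0)) => [|i _]; last exact: eq_ss'.
by apply/eqP; rewrite eqn_leq !size_le // => i; rewrite eq_ss'.
Qed.

Lemma weight_eq1 m : (weight m == 1) = (val m == [::]).
Proof.
apply/eqP/eqP => [w1|m0]; last by rewrite weightE m0.
by have /weight_inj -> : weight m = weight (nrm [::]) by rewrite w1 weight_nrm.
Qed.

Lemma monom_of_weight_ex k : exists m : monom, 0 < k -> weight m = k.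
Proof.
case: k => [|k]; first by exists (nrm [::]).
by have [s sE] := wt_surj (ltn0Sn k); exists (nrm s); rewrite weight_nrm.
Qed.

Definition monom_of_weight k : monom :=
  proj1_sig (constructive_indefinite_description _ (monom_of_weight_ex k)).

Lemma monom_of_weightK k : 0 < k -> weight (monom_of_weight k) = k.
Proof. by rewrite /monom_of_weight; case: constructive_indefinite_description. Qed.

Lemma weightK : cancel weight monom_of_weight.
Proof. by move=> m; apply: weight_inj; rewrite monom_of_weightK ?weight_gt0. Qed.

Section Reindexing.
Variables (K : fieldType) (n : nat).

Lemma An_of_eq (f g : pser K) :
  (forall m, weight m <= n -> f m = g m) -> An_of n f = An_of n g.
Proof.
move=> eq_fg; apply: subset_eq_compat; apply: functional_extensionality => h.
apply: propositional_extensionality; rewrite /coset /In_ideal.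
split=> h_in m m_le;
  [rewrite -(eq_fg m m_le) | rewrite (eq_fg m m_le)]; exact: h_in.
Qed.

Lemma An_repP (f : pser K) m : weight m <= n -> An_rep (An_of n f) m = f m.
Proof.
rewrite /An_rep; case: constructive_indefinite_description => r /= rE m_le.
have : coset n f r by rewrite rE => m' _; rewrite subrr.
by move=> /(_ m m_le) /eqP; rewrite subr_eq0 => /eqP.
Qed.

Lemma An_repK (a : An K n) : An_of n (An_rep a) = a.
Proof.
case: a => S S_coset; rewrite /An_rep /=.
by case: constructive_indefinite_description => r /= rE; apply: subset_eq_compat.
Qed.

Lemma trunc_weight (F : nat -> K) m :
  weight m <= n -> trunc n F (weight m) = F (weight m).
Proof. by move=> m_le; rewrite /trunc weight_gt0 m_le. Qed.

Definition An_of_Gamma (f : Gamma K n) : An K n :=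
  An_of n (fun m => sval f (weight m)).

Definition Gamma_of_An (a : An K n) : Gamma K n :=
  mkG n (fun k => An_rep a (monom_of_weight k)).

Lemma An_of_GammaK : cancel An_of_Gamma Gamma_of_An.
Proof.
case=> f f_supp; apply: subset_eq_compat; apply: functional_extensionality => k.
rewrite /trunc; case: ifP => [/andP[k_gt0 k_le]|/negbT/f_supp //].
by rewrite An_repP monom_of_weightK.
Qed.

Lemma Gamma_of_AnK : cancel Gamma_of_An An_of_Gamma.
Proof.
move=> a; rewrite -[RHS]An_repK; apply: An_of_eq => m m_le /=.
by rewrite trunc_weight // weightK.
Qed.

Lemma An_of_Gamma_add f g :
  An_of_Gamma (G_add f g) = An_add (An_of_Gamma f) (An_of_Gamma g).
Proof.
by apply: An_of_eq => m m_le /=; rewrite trunc_weight // /ps_add !An_repP.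
Qed.

Lemma An_of_Gamma_scale c f :
  An_of_Gamma (G_scale c f) = An_scale c (An_of_Gamma f).
Proof.
by apply: An_of_eq => m m_le /=; rewrite trunc_weight // /ps_scale An_repP.
Qed.

Lemma An_of_Gamma_mul f g :
  An_of_Gamma (G_mul f g) = An_mul (An_of_Gamma f) (An_of_Gamma g).
Proof.
apply: An_of_eq => m m_le /=; rewrite trunc_weight // /ps_mul.
rewrite [in divisors _]weightE (perm_big _ (divisors_wt _)) big_map.
apply: eq_big_seq => d d_in; have mE := weight_divs d_in.
rewrite !An_repP; first by rewrite -(weight_nrm d) mE mulKn ?weight_gt0.
- by rewrite (leq_trans _ m_le) // mE leq_pmull ?weight_gt0.
- by rewrite (leq_trans _ m_le) // mE leq_pmulr ?weight_gt0.
Qed.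

Lemma An_of_Gamma_one : An_of_Gamma (G_one K n) = An_one K n.
Proof.
by apply: An_of_eq => m m_le /=; rewrite trunc_weight // weight_eq1 /ps_one; case: eqP.
Qed.

End Reindexing.

Theorem mainTheorem5 (K : fieldType) (hK : [pchar K]%R =i pred0) (n : nat)
    (hn : (0 < n)%N) :
  exists phi : Gamma K n -> An K n,
    bijective phi /\
    (forall f g : Gamma K n, phi (G_add f g) = An_add (phi f) (phi g)) /\
    (forall (c : K) (f : Gamma K n), phi (G_scale c f) = An_scale c (phi f)) /\
    (forall f g : Gamma K n, phi (G_mul f g) = An_mul (phi f) (phi g)) /\
    phi (G_one K n) = An_one K n.
Proof.
exists (@An_of_Gamma K n); split.
  exact: Bijective (@An_of_GammaK K n) (@Gamma_of_AnK K n).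
split; first exact: An_of_Gamma_add.
split; first exact: An_of_Gamma_scale.
split; first exact: An_of_Gamma_mul.
exact: An_of_Gamma_one.
Qed.
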